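(* Suppose $B$ is a preorder on $\mathcal{SC}$. Then $\rho\dashv_B\overline{\rho}$ for every m-closed $\rho\in\mathcal{SC}$.
   Context: Fix base types $BT$ with preorder $\leq_{\mathsf b}$ and labels $\mathcal L$. Contract terms: $\sigma::=\mathbf 1\mid ?\mathtt t.\sigma\mid !\mathtt t.\sigma\mid !(\sigma).\sigma\mid ?(\sigma).\sigma\mid \sum_{i\in I}?l_i.\sigma_i\mid \bigoplus_{i\in I}!l_i.\sigma_i\mid \mu x.\sigma\mid x$ ($I$ finite nonempty, labels distinct). $\mathcal{SC}$ = closed guarded terms. LTS: $\mathbf 1\xrightarrow\checkmark$; $\lambda.\sigma\xrightarrow\lambda\sigma$ for prefixes (including $!l.\sigma$); $\bigoplus_{i\in I}!l_i.\sigma_i\xrightarrow\tau!l_i.\sigma_i$ for $|I|>1$; $\sum ?l_i.\sigma_i\xrightarrow{?l_i}\sigma_i$; $\mu x.\sigma\xrightarrow\tau\sigma[\mu x.\sigma/x]$. $\lambda_1\bowtie_B\lambda_2$ iff the pair is $(!l,?l)$, $(?l,!l)$, $(!\mathtt t_1,?\mathtt t_2)$ with $\mathtt t_1\leq_{\mathsf b}\mathtt t_2$, $(?\mathtt t_1,!\mathtt t_2)$ with $\mathtt t_2\leq_{\mathsf b}\mathtt t_1$, $(!(\sigma_1),?(\sigma_2))$ with $\sigma_1B\sigma_2$, $(?(\sigma_1),!(\sigma_2))$ with $\sigma_2B\sigma_1$. $\rho\|\sigma\xrightarrow\tau_B$ by a $\tau$ of either side or synchronisation on $\lambda_1\bowtie_B\lambda_2$.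 $\dashv_B$: greatest $R$ with $\rho R\sigma$ implying (i) if $\rho\|\sigma$ has no $\xrightarrow\tau_B$ move then $\rho\xrightarrow\checkmark$ and $\sigma\xrightarrow\checkmark$; (ii) every $\rho\|\sigma\xrightarrow\tau_B\rho'\|\sigma'$ has $\rho'R\sigma'$. Standard dual (messages unchanged): $\overline{\mathbf 1}=\mathbf 1$, $\overline x=x$, $\overline{\mu x.\sigma}=\mu x.\overline\sigma$, $?$ and $!$ prefixes (base-type and contract messages) swapped with the same message, $\overline{\sum_i ?l_i.\sigma_i}=\bigoplus_i !l_i.\overline{\sigma_i}$, $\overline{\bigoplus_i !l_i.\sigma_i}=\sum_i ?l_i.\overline{\sigma_i}$. M-closed: $\mathbf 1$ and $x$ are m-closed; $\mu x.\sigma'$ is m-closed if $\sigma'$ is; $!(\sigma^m).\sigma'$ and $?(\sigma^m).\sigma'$ are m-closed if $\sigma'$ is m-closed and $\sigma^m$ is closed; $?\mathtt t.\sigma'$, $!\mathtt t.\sigma'$ are m-closed if $\sigma'$ is; sums are m-closed if all summands' continuations are. *)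

From Stdlib Require Import List.
Import ListNotations.
Set Implicit Arguments.

Section Contracts.
Context (BT : Type) (L : Type).

(* Contract terms.  Ext = external choice  sum_{i} ?l_i.s_i,
   Int = internal choice  (+)_{i} !l_i.s_i  (the prefix !l.s is Int [(l,s)]).
   Recursion variables are named by nat. *)
Inductive term : Type :=
| One   : term
| InT   : BT -> term -> term
| OutT  : BT -> term -> term
| OutC  : term -> term -> term
| InC   : term -> term -> term
| Ext   : list (L * term) -> term
| Int   : list (L * term) -> term
| Mu    : nat -> term -> term
| Var   : nat -> term.

(* substitution s[r/x] (used only with closed r, so no capture) *)
Fixpoint subst (r : term) (x : nat) (s : term) : term :=
  match s with
  | One => One
  | InT t s' => InT t (subst r x s')
  | OutT t s' => OutT t (subst r x s')
  | OutC m s' => OutC (subst r x m) (subst r x s')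
  | InC m s' => InC (subst r x m) (subst r x s')
  | Ext bs => Ext (map (fun p => (fst p, subst r x (snd p))) bs)
  | Int bs => Int (map (fun p => (fst p, subst r x (snd p))) bs)
  | Mu y s' => if Nat.eqb x y then Mu y s' else Mu y (subst r x s')
  | Var y => if Nat.eqb x y then r else Var y
  end.

Inductive free (x : nat) : term -> Prop :=
| fr_InT t s : free x s -> free x (InT t s)
| fr_OutT t s : free x s -> free x (OutT t s)
| fr_OutC1 m s : free x m -> free x (OutC m s)
| fr_OutC2 m s : free x s -> free x (OutC m s)
| fr_InC1 m s : free x m -> free x (InC m s)
| fr_InC2 m s : free x s -> free x (InC m s)
| fr_Ext bs l s : In (l, s) bs -> free x s -> free x (Ext bs)
| fr_Int bs l s : In (l, s) bs -> free x s -> free x (Int bs)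
| fr_Mu y s : x <> y -> free x s -> free x (Mu y s)
| fr_Var : free x (Var x).

Definition closed (s : term) : Prop := forall x, ~ free x s.

Fixpoint unguarded (x : nat) (s : term) : Prop :=
  match s with
  | Var y => x = y
  | Mu y s' => x <> y /\ unguarded x s'
  | _ => False
  end.

Inductive guarded : term -> Prop :=
| g_One : guarded One
| g_Var x : guarded (Var x)
| g_InT t s : guarded s -> guarded (InT t s)
| g_OutT t s : guarded s -> guarded (OutT t s)
| g_OutC m s : guarded m -> guarded s -> guarded (OutC m s)
| g_InC m s : guarded m -> guarded s -> guarded (InC m s)
| g_Ext bs : (forall l s, In (l, s) bs -> guarded s) -> guarded (Ext bs)
| g_Int bs : (forall l s, In (l, s) bs -> guarded s) -> guarded (Int bs)
| g_Mu x s : guarded s -> ~ unguarded x s -> guarded (Mu x s).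

Inductive wf : term -> Prop :=
| w_One : wf One
| w_Var x : wf (Var x)
| w_InT t s : wf s -> wf (InT t s)
| w_OutT t s : wf s -> wf (OutT t s)
| w_OutC m s : wf m -> wf s -> wf (OutC m s)
| w_InC m s : wf m -> wf s -> wf (InC m s)
| w_Ext bs : bs <> [] -> NoDup (map fst bs) ->
    (forall l s, In (l, s) bs -> wf s) -> wf (Ext bs)
| w_Int bs : bs <> [] -> NoDup (map fst bs) ->
    (forall l s, In (l, s) bs -> wf s) -> wf (Int bs)
| w_Mu x s : wf s -> wf (Mu x s).

Definition SC (s : term) : Prop := wf s /\ closed s /\ guarded s.

Inductive act : Type :=
| aCheck | aTau
| aInT (t : BT) | aOutT (t : BT)
| aInC (m : term) | aOutC (m : term)
| aInL (l : L) | aOutL (l : L).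

Inductive step : term -> act -> term -> Prop :=
| st_One : step One aCheck One
| st_InT t s : step (InT t s) (aInT t) s
| st_OutT t s : step (OutT t s) (aOutT t) s
| st_InC m s : step (InC m s) (aInC m) s
| st_OutC m s : step (OutC m s) (aOutC m) s
| st_OutL l s : step (Int [(l, s)]) (aOutL l) s
| st_IntTau bs l s : 1 < length bs -> In (l, s) bs -> step (Int bs) aTau (Int [(l, s)])
| st_Ext bs l s : In (l, s) bs -> step (Ext bs) (aInL l) s
| st_Mu x s : step (Mu x s) aTau (subst (Mu x s) x s).

Definition compat (leb : BT -> BT -> Prop) (B : term -> term -> Prop)
  (a1 a2 : act) : Prop :=
  match a1, a2 with
  | aOutL l1, aInL l2 => l1 = l2
  | aInL l1, aOutL l2 => l1 = l2
  | aOutT t1, aInT t2 => leb t1 t2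
  | aInT t1, aOutT t2 => leb t2 t1
  | aOutC s1, aInC s2 => B s1 s2
  | aInC s1, aOutC s2 => B s2 s1
  | _, _ => False
  end.

Inductive sys_tau (leb : BT -> BT -> Prop) (B : term -> term -> Prop)
  : term -> term -> term -> term -> Prop :=
| sy_l r r' s : step r aTau r' -> sys_tau leb B r s r' s
| sy_r r s s' : step s aTau s' -> sys_tau leb B r s r s'
| sy_sync r r' s s' a1 a2 :
    step r a1 r' -> step s a2 s' -> compat leb B a1 a2 -> sys_tau leb B r s r' s'.

Definition compliance_rel (leb : BT -> BT -> Prop) (B : term -> term -> Prop)
  (R : term -> term -> Prop) : Prop :=
  forall r s, R r s ->
    ((forall r' s', ~ sys_tau leb B r s r' s') ->
        (exists r1, step r aCheck r1) /\ (exists s1, step s aCheck s1)) /\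
    (forall r' s', sys_tau leb B r s r' s' -> R r' s').

(* rho -|_B sigma : the greatest compliance relation *)
Definition complies (leb : BT -> BT -> Prop) (B : term -> term -> Prop)
  (r s : term) : Prop :=
  exists R, compliance_rel leb B R /\ R r s.

Fixpoint dual (s : term) : term :=
  match s with
  | One => One
  | Var x => Var x
  | Mu x s' => Mu x (dual s')
  | InT t s' => OutT t (dual s')
  | OutT t s' => InT t (dual s')
  | InC m s' => OutC m (dual s')
  | OutC m s' => InC m (dual s')
  | Ext bs => Int (map (fun p => (fst p, dual (snd p))) bs)
  | Int bs => Ext (map (fun p => (fst p, dual (snd p))) bs)
  end.

Inductive mclosed : term -> Prop :=
| mc_One : mclosed One
| mc_Var x : mclosed (Var x)
| mc_Mu x s : mclosed s -> mclosed (Mu x s)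
| mc_OutC m s : closed m -> mclosed s -> mclosed (OutC m s)
| mc_InC m s : closed m -> mclosed s -> mclosed (InC m s)
| mc_InT t s : mclosed s -> mclosed (InT t s)
| mc_OutT t s : mclosed s -> mclosed (OutT t s)
| mc_Ext bs : (forall l s, In (l, s) bs -> mclosed s) -> mclosed (Ext bs)
| mc_Int bs : (forall l s, In (l, s) bs -> mclosed s) -> mclosed (Int bs).

End Contracts.

Arguments One {BT L}.
Arguments Var {BT L}.

(* A term and its dual offer exactly complementary actions, so [rho || dual rho]
   can always synchronise (using only reflexivity of [leb] and of [B] on [SC]),
   and after a synchronisation the two sides are again [k] and [dual k] for the
   common continuation [k].  Two things break this exact symmetry, and the
   compliance relation [dual_pair] absorbs both: each side unfolds its
   recursions independently (so the sides may sit at different points of the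
   same unfolding chain), and an internal choice may commit to a branch before
   synchronising.  M-closedness is what makes duality commute with unfolding:
   [dual] leaves messages untouched, so unfolding must leave them untouched too. *)
From Stdlib Require Import List Lia Arith Relations.
Import ListNotations.
Set Implicit Arguments.

Section Duality.
Context {BT L : Type}.

Inductive wf_sc : term BT L -> Prop :=
| ws_One : wf_sc One
| ws_Var x : wf_sc (Var x)
| ws_InT t s : wf_sc s -> wf_sc (InT t s)
| ws_OutT t s : wf_sc s -> wf_sc (OutT t s)
| ws_OutC m s : SC m -> wf_sc s -> wf_sc (OutC m s)
| ws_InC m s : SC m -> wf_sc s -> wf_sc (InC m s)
| ws_Ext bs : bs <> [] -> NoDup (map fst bs) ->
    (forall l s, In (l, s) bs -> wf_sc s) -> wf_sc (Ext bs)
| ws_Int bs : bs <> [] -> NoDup (map fst bs) ->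
    (forall l s, In (l, s) bs -> wf_sc s) -> wf_sc (Int bs)
| ws_Mu x s : wf_sc s -> wf_sc (Mu x s).

Lemma wf_sc_of (s : term BT L) : mclosed s -> wf s -> guarded s -> wf_sc s.
Proof.
  induction 1; intros Hw Hg; inversion Hw; subst; inversion Hg; subst;
    constructor; eauto; try (split; [|split]; assumption).
Qed.

Lemma in_map_snd (f : term BT L -> term BT L) bs l s :
  In (l, s) (map (fun p : L * term BT L => (fst p, f (snd p))) bs) ->
  exists c, s = f c /\ In (l, c) bs.
Proof.
  intros H. apply in_map_iff in H as [[l' c] [He Hin]].
  simpl in He. inversion He; subst. eauto.
Qed.

Lemma nodup_fst_in {bs : list (L * term BT L)} {l c c'} :
  NoDup (map fst bs) -> In (l, c) bs -> In (l, c') bs -> c = c'.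
Proof.
  induction bs as [|[l0 c0] bs IH]; simpl; intros Hn H1 H2; [contradiction|].
  inversion Hn; subst.
  destruct H1 as [H1|H1]; destruct H2 as [H2|H2].
  - inversion H1; inversion H2; subst; auto.
  - inversion H1; subst. exfalso; apply H3. apply in_map_iff; exists (l, c'); auto.
  - inversion H2; subst. exfalso; apply H3. apply in_map_iff; exists (l, c); auto.
  - eauto.
Qed.

(** * Substitution *)

Lemma subst_notfree (r : term BT L) x m : wf m -> ~ free x m -> subst r x m = m.
Proof.
  intros Hw; revert r x; induction Hw; intros r y Hf; simpl; auto.
  - destruct (Nat.eqb_spec y x); subst; [ exfalso; apply Hf; constructor | auto].
  - rewrite IHHw; auto. intro; apply Hf; constructor; auto.
  - rewrite IHHw; auto. intro; apply Hf; constructor; auto.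
  - rewrite IHHw1, IHHw2; auto; intro; apply Hf;
      first [apply fr_OutC1; assumption | apply fr_OutC2; assumption].
  - rewrite IHHw1, IHHw2; auto; intro; apply Hf;
      first [apply fr_InC1; assumption | apply fr_InC2; assumption].
  - f_equal. rewrite <- (map_id bs) at 2. apply map_ext_in. intros [l c] Hin.
    simpl. rewrite H2 with (l := l); auto. intro; apply Hf; econstructor; eauto.
  - f_equal. rewrite <- (map_id bs) at 2. apply map_ext_in. intros [l c] Hin.
    simpl. rewrite H2 with (l := l); auto. intro; apply Hf; econstructor; eauto.
  - destruct (Nat.eqb_spec y x); subst; auto. rewrite IHHw; auto.
    intro; apply Hf; constructor; auto.
Qed.

Lemma subst_SC (r : term BT L) x m : SC m -> subst r x m = m.
Proof. intros [Hw [Hc _]]. apply subst_notfree; auto. Qed.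

Lemma dual_subst (r s : term BT L) x :
  wf_sc s -> dual (subst r x s) = subst (dual r) x (dual s).
Proof.
  induction 1; simpl; auto.
  - destruct (Nat.eqb x x0); auto.
  - rewrite IHwf_sc; auto.
  - rewrite IHwf_sc; auto.
  - rewrite IHwf_sc, (subst_SC r x H), (subst_SC (dual r) x H); auto.
  - rewrite IHwf_sc, (subst_SC r x H), (subst_SC (dual r) x H); auto.
  - f_equal. rewrite !map_map. apply map_ext_in. intros [l c] Hin. simpl.
    rewrite H2 with (l := l); auto.
  - f_equal. rewrite !map_map. apply map_ext_in. intros [l c] Hin. simpl.
    rewrite H2 with (l := l); auto.
  - destruct (Nat.eqb x x0); simpl; auto. rewrite IHwf_sc; auto.
Qed.

Lemma wf_sc_subst (r s : term BT L) x : wf_sc r -> wf_sc s -> wf_sc (subst r x s).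
Proof.
  intros Hr; induction 1; simpl.
  - constructor.
  - destruct (Nat.eqb x x0); auto; constructor.
  - constructor; auto.
  - constructor; auto.
  - rewrite subst_SC; auto. constructor; auto.
  - rewrite subst_SC; auto. constructor; auto.
  - constructor.
    + destruct bs; simpl; congruence.
    + rewrite map_map. exact H0.
    + intros l s0 Hin. apply in_map_snd in Hin as [c [-> Hin]]. eauto.
  - constructor.
    + destruct bs; simpl; congruence.
    + rewrite map_map. exact H0.
    + intros l s0 Hin. apply in_map_snd in Hin as [c [-> Hin]]. eauto.
  - destruct (Nat.eqb x x0); constructor; auto.
Qed.

Lemma free_subst (r s : term BT L) x y :
  wf_sc s -> free y (subst r x s) -> free y r \/ (free y s /\ y <> x).
Proof.
  intros Hg; revert y; induction Hg; simpl; intros y Hf.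
  - inversion Hf.
  - destruct (Nat.eqb_spec x x0); auto. inversion Hf; subst.
    right; split; auto; constructor.
  - inversion Hf; subst. destruct (IHHg _ ltac:(eassumption)) as [?|[? ?]]; auto.
    right; split; auto; constructor; auto.
  - inversion Hf; subst. destruct (IHHg _ ltac:(eassumption)) as [?|[? ?]]; auto.
    right; split; auto; constructor; auto.
  - rewrite subst_SC in Hf; auto. destruct H as [_ [Hc _]].
    inversion Hf; subst.
    + exfalso. eapply Hc; eassumption.
    + destruct (IHHg _ ltac:(eassumption)) as [?|[? ?]]; auto.
      right; split; auto; apply fr_OutC2; auto.
  - rewrite subst_SC in Hf; auto. destruct H as [_ [Hc _]].
    inversion Hf; subst.
    + exfalso. eapply Hc; eassumption.
    + destruct (IHHg _ ltac:(eassumption)) as [?|[? ?]]; auto.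
      right; split; auto; apply fr_InC2; auto.
  - inversion Hf; subst.
    match goal with Hi : In _ (map _ _) |- _ => apply in_map_snd in Hi as [c [-> Hin]] end.
    destruct (H2 _ _ Hin y ltac:(eassumption)) as [?|[? ?]]; auto.
    right; split; auto; econstructor; eauto.
  - inversion Hf; subst.
    match goal with Hi : In _ (map _ _) |- _ => apply in_map_snd in Hi as [c [-> Hin]] end.
    destruct (H2 _ _ Hin y ltac:(eassumption)) as [?|[? ?]]; auto.
    right; split; auto; econstructor; eauto.
  - destruct (Nat.eqb_spec x x0); subst.
    + right. split; auto. inversion Hf; auto.
    + inversion Hf; subst. destruct (IHHg _ ltac:(eassumption)) as [?|[? ?]]; auto.
      right; split; auto; constructor; auto.
Qed.

Definition contract (a : term BT L) : Prop := closed a /\ wf_sc a.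

Lemma contract_unfold x (c : term BT L) :
  contract (Mu x c) -> contract (subst (Mu x c) x c).
Proof.
  intros [Hc Hg]. inversion Hg; subst. split.
  - intros y Hf. destruct (free_subst (Mu x c) x H0 Hf) as [?|[? ?]].
    + eapply Hc; eauto.
    + eapply Hc. constructor; eauto.
  - apply wf_sc_subst; auto.
Qed.

Lemma contract_Int_branch bs l (c : term BT L) :
  contract (Int bs) -> In (l, c) bs -> contract (Int [(l, c)]).
Proof.
  intros [Hcl Hg] Hin. split.
  - intros y Hy.
    inversion Hy as [| | | | | | | ? l' c' Hin' Hf | |]; subst.
    destruct Hin' as [E|[]]; inversion E; subst.
    apply (Hcl y); econstructor; eauto.
  - inversion Hg; subst. constructor.
    + discriminate.
    + repeat constructor; simpl; tauto.
    + intros l' c' [E|[]]; inversion E; subst; eauto.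
Qed.

Lemma contract_step (a a' : term BT L) α : contract a -> step a α a' -> contract a'.
Proof.
  intros Ha Hst; pose proof Ha as [Hcl Hg]; destruct Hst.
  - exact Ha.
  - split; [intros y Hy; apply (Hcl y); constructor; exact Hy | now inversion Hg].
  - split; [intros y Hy; apply (Hcl y); constructor; exact Hy | now inversion Hg].
  - split; [intros y Hy; apply (Hcl y); apply fr_InC2; exact Hy | now inversion Hg].
  - split; [intros y Hy; apply (Hcl y); apply fr_OutC2; exact Hy | now inversion Hg].
  - split; [intros y Hy; apply (Hcl y); econstructor; [left; reflexivity | exact Hy]|].
    inversion Hg as [| | | | | | | ? _ _ Hbs |]; subst.
    eapply Hbs; left; reflexivity.
  - eapply contract_Int_branch; eauto.
  - split; [intros y Hy; apply (Hcl y); econstructor; eauto|].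
    inversion Hg; subst; eauto.
  - apply contract_unfold; exact Ha.
Qed.

(** * Unfolding chains *)

Definition is_mu (a : term BT L) : Prop := exists x c, a = Mu x c.

Definition unfold_step (a b : term BT L) : Prop :=
  exists x c, a = Mu x c /\ b = subst (Mu x c) x c.

Definition unfolds : relation (term BT L) := clos_refl_trans_1n _ unfold_step.

Definition same_unfolding (a b : term BT L) : Prop := unfolds a b \/ unfolds b a.

Lemma unfold_step_step (a b : term BT L) : unfold_step a b -> step a (aTau BT L) b.
Proof. intros (x & c & -> & ->). constructor. Qed.

Lemma unfold_step_functional (a b b' : term BT L) :
  unfold_step a b -> unfold_step a b' -> b = b'.
Proof. intros (x & c & -> & ->) (x' & c' & E & ->). inversion E; subst. reflexivity. Qed.

Lemma unfolds_snoc (a b b' : term BT L) : unfolds a b -> unfold_step b b' -> unfolds a b'.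
Proof.
  intros Hab Hbb'. apply clos_rt_rt1n. apply rt_trans with b.
  - apply clos_rt1n_rt, Hab.
  - apply rt_step, Hbb'.
Qed.

Lemma same_unfolding_sym (a b : term BT L) : same_unfolding a b -> same_unfolding b a.
Proof. intros [H|H]; [right|left]; exact H. Qed.

Lemma same_unfolding_unfold (a a' b : term BT L) :
  same_unfolding a b -> unfold_step a a' -> same_unfolding a' b.
Proof.
  intros [Hab|Hba] Ha.
  - destruct Hab as [|a'' b Ha'' Hrest].
    + right. eapply unfolds_snoc; [constructor | exact Ha].
    + left. rewrite (unfold_step_functional Ha Ha''). exact Hrest.
  - right. eapply unfolds_snoc; eauto.
Qed.

Lemma same_unfolding_eq (a b : term BT L) :
  same_unfolding a b -> ~ is_mu a -> ~ is_mu b -> a = b.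
Proof.
  intros [H|H] Ha Hb; destruct H as [|? ? Hu _]; auto;
    exfalso; [apply Ha | apply Hb]; destruct Hu as (x & c & -> & _); exists x, c; reflexivity.
Qed.

Lemma is_mu_dual (b : term BT L) : is_mu b -> is_mu (dual b).
Proof. intros (x & c & ->). exists x, (dual c). reflexivity. Qed.

Lemma dual_unfold_step (b s : term BT L) :
  wf_sc b -> unfold_step (dual b) s -> exists b', unfold_step b b' /\ s = dual b'.
Proof.
  intros Hb (x & c & E & ->). destruct b; try discriminate.
  simpl in E. inversion E; subst. inversion Hb; subst.
  eexists; split; [exists x, b; split; reflexivity|].
  rewrite dual_subst; auto.
Qed.

(** * Committing to a branch of an internal choice *)

Definition commits (a r : term BT L) : Prop :=
  r = a \/ exists bs l c, a = Int bs /\ r = Int [(l, c)] /\ In (l, c) bs.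

Lemma commits_nonInt (a r : term BT L) : commits a r -> (forall bs, a <> Int bs) -> r = a.
Proof. intros [->|(bs & _ & _ & -> & _)] Ha; [reflexivity | now destruct (Ha bs)]. Qed.

Lemma commits_contract (a r : term BT L) : contract a -> commits a r -> contract r.
Proof.
  intros Ha [->|(bs & l & c & -> & -> & Hin)]; [exact Ha|].
  eapply contract_Int_branch; eauto.
Qed.

Lemma commits_tau (a r r' : term BT L) :
  commits a r -> step r (aTau BT L) r' -> commits a r' \/ unfold_step a r'.
Proof.
  intros [->|(bs & l & c & -> & -> & Hin)] H; inversion H; subst.
  - left. right. exists bs, l, s. auto.
  - right. exists x, s. split; reflexivity.
  - simpl in *. lia.
Qed.

Lemma commits_mu_step (a r r' : term BT L) α :
  commits a r -> step r α r' -> is_mu a -> α = aTau BT L.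
Proof.
  intros Hr H (x & c & ->). rewrite (commits_nonInt Hr) in H by discriminate.
  inversion H; reflexivity.
Qed.

Lemma commits_Int_out xs (s s' : term BT L) l :
  commits (Int xs) s -> step s (aOutL BT l) s' -> In (l, s') xs.
Proof.
  intros [->|(bs & l' & c & E & -> & Hin)] H; inversion H; subst.
  - left; reflexivity.
  - inversion E; subst. exact Hin.
Qed.

Lemma commits_Int_progress xs (s : term BT L) :
  xs <> [] -> commits (Int xs) s ->
  (exists s', step s (aTau BT L) s') \/
  exists l c, step s (aOutL BT l) c /\ In (l, c) xs.
Proof.
  intros Hne [->|(bs & l & c & E & -> & Hin)].
  - destruct xs as [|[l c] [|q xs']]; [congruence| |].
    + right. exists l, c. split; [constructor | left; reflexivity].
    + left. exists (Int [(l, c)]). apply st_IntTau; [simpl; lia | left; reflexivity].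
  - inversion E; subst. right. exists l, c. split; [constructor | exact Hin].
Qed.

(** * Synchronising a term with its dual *)

Section Compliance.
Variable leb : BT -> BT -> Prop.
Variable B : term BT L -> term BT L -> Prop.

Lemma compat_not_tau {α1 α2 : act BT L} :
  compat leb B α1 α2 -> α1 <> aTau BT L /\ α2 <> aTau BT L.
Proof. destruct α1, α2; simpl; intuition discriminate. Qed.

Lemma dual_sync (a r s r' s' : term BT L) α1 α2 :
  wf_sc a -> commits a r -> commits (dual a) s ->
  step r α1 r' -> step s α2 s' -> compat leb B α1 α2 -> s' = dual r'.
Proof.
  intros Hg Hr Hs H1 H2 Hc.
  destruct a as [| t k | t k | m k | m k | bs | bs | x k | x]; simpl in Hs;
    try (rewrite (commits_nonInt Hr) in H1 by discriminate);
    try (rewrite (commits_nonInt Hs) in H2 by discriminate).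
  1-5, 8-9: inversion H1; subst; inversion H2; subst; simpl in Hc; easy.
  - inversion H1 as [| | | | | | | ? l1 ? Hin1 |]; subst.
    destruct α2; simpl in Hc; try contradiction; subst.
    apply (commits_Int_out Hs), in_map_snd in H2 as [c [-> Hin2]].
    inversion Hg as [| | | | | | ? _ Hnd _ | |]; subst.
    now rewrite (nodup_fst_in Hnd Hin1 Hin2).
  - inversion H2 as [| | | | | | | ? l2 ? Hin2 |]; subst.
    destruct α1; simpl in Hc; try contradiction; subst.
    apply (commits_Int_out Hr) in H1.
    apply in_map_snd in Hin2 as [c [-> Hin2]].
    inversion Hg as [| | | | | | | ? _ Hnd _ |]; subst.
    now rewrite (nodup_fst_in Hnd H1 Hin2).
Qed.

Hypothesis leb_refl : forall t, leb t t.
Hypothesis B_refl : forall s, SC s -> B s s.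

Lemma dual_progress (a r s : term BT L) :
  contract a -> ~ is_mu a -> commits a r -> commits (dual a) s ->
  (r = One /\ s = One) \/ exists r' s', sys_tau leb B r s r' s'.
Proof.
  intros [Hcl Hg] Hmu Hr Hs.
  destruct a as [| t k | t k | m k | m k | bs | bs | x k | x]; simpl in Hs;
    try (rewrite (commits_nonInt Hr) by discriminate);
    try (rewrite (commits_nonInt Hs) by discriminate).
  - left; split; reflexivity.
  - right. exists k, (dual k). eapply sy_sync; [constructor | constructor | apply leb_refl].
  - right. exists k, (dual k). eapply sy_sync; [constructor | constructor | apply leb_refl].
  - right. exists k, (dual k). eapply sy_sync; [constructor | constructor |].
    apply B_refl. now inversion Hg.
  - right. exists k, (dual k). eapply sy_sync; [constructor | constructor |].
    apply B_refl. now inversion Hg.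
  - inversion Hg as [| | | | | | ? Hbs _ _ | |]; subst.
    assert (Hne : map (fun p => (fst p, dual (snd p))) bs <> []) by (now destruct bs).
    destruct (commits_Int_progress Hne Hs) as [[s' Hs']|(l & c & Hs' & Hin)].
    + right. exists (Ext bs), s'. now apply sy_r.
    + apply in_map_snd in Hin as [c0 [-> Hin]].
      right. exists c0, (dual c0). eapply sy_sync; [apply st_Ext, Hin | exact Hs' | reflexivity].
  - inversion Hg as [| | | | | | | ? Hne _ _ |]; subst.
    destruct (commits_Int_progress Hne Hr) as [[r' Hr']|(l & c & Hr' & Hin)].
    + right. exists r'; eexists. now apply sy_l.
    + right. exists c, (dual c). eapply sy_sync; [exact Hr' | apply st_Ext | reflexivity].
      apply in_map_iff. exists (l, c). auto.
  - exfalso. apply Hmu. exists x, k. reflexivity.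
  - exfalso. apply (Hcl x). constructor.
Qed.

(* [a] and [b] are the two sides' positions on a common unfolding chain;
   [r] and [s] may have committed to a branch of an internal choice. *)
Definition dual_pair (r s : term BT L) : Prop :=
  exists a b, contract a /\ contract b /\ same_unfolding a b /\
    commits a r /\ commits (dual b) s.

Lemma dual_pair_diag (k : term BT L) : contract k -> dual_pair k (dual k).
Proof.
  intros Hk. exists k, k.
  repeat split; try apply Hk; left; [constructor | reflexivity | reflexivity].
Qed.

Lemma dual_pair_stuck (r s : term BT L) :
  dual_pair r s -> (forall r' s', ~ sys_tau leb B r s r' s') -> r = One /\ s = One.
Proof.
  intros (a & b & Ha & Hb & Hab & Hr & Hs) Hstuck.
  assert (Hmua : ~ is_mu a).
  { intros (x & c & ->). rewrite (commits_nonInt Hr) in Hstuck by discriminate.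
    eapply Hstuck, sy_l, st_Mu. }
  assert (Hmub : ~ is_mu b).
  { intros Hmu. destruct (is_mu_dual Hmu) as (x & c & E).
    rewrite E in Hs. rewrite (commits_nonInt Hs) in Hstuck by discriminate.
    eapply Hstuck, sy_r, st_Mu. }
  rewrite <- (same_unfolding_eq Hab Hmua Hmub) in Hs.
  destruct (dual_progress Ha Hmua Hr Hs) as [Hdone|(r' & s' & Hst)];
    [exact Hdone | destruct (Hstuck _ _ Hst)].
Qed.

Lemma dual_pair_tau (r s r' s' : term BT L) :
  dual_pair r s -> sys_tau leb B r s r' s' -> dual_pair r' s'.
Proof.
  intros (a & b & Ha & Hb & Hab & Hr & Hs) Hst.
  destruct Hst as [r r' s H | r s s' H | r r' s s' α1 α2 H1 H2 Hc].
  - destruct (commits_tau Hr H) as [Hr'|Hu].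
    + exists a, b. auto.
    + exists r', b. refine (conj _ (conj Hb (conj _ (conj (or_introl eq_refl) Hs)))).
      * eapply contract_step; [exact Ha | apply unfold_step_step, Hu].
      * eapply same_unfolding_unfold; eauto.
  - destruct (commits_tau Hs H) as [Hs'|Hu].
    + exists a, b. auto.
    + destruct (dual_unfold_step (proj2 Hb) Hu) as (b' & Hu' & ->).
      exists a, b'. refine (conj Ha (conj _ (conj _ (conj Hr (or_introl eq_refl))))).
      * eapply contract_step; [exact Hb | apply unfold_step_step, Hu'].
      * apply same_unfolding_sym. eapply same_unfolding_unfold; eauto.
        apply same_unfolding_sym, Hab.
  - destruct (compat_not_tau Hc) as [Hα1 Hα2].
    assert (Hmua : ~ is_mu a) by (intros Hmu; exact (Hα1 (commits_mu_step Hr H1 Hmu))).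
    assert (Hmub : ~ is_mu b)
      by (intros Hmu; exact (Hα2 (commits_mu_step Hs H2 (is_mu_dual Hmu)))).
    rewrite <- (same_unfolding_eq Hab Hmua Hmub) in Hs.
    rewrite (dual_sync (proj2 Ha) Hr Hs H1 H2 Hc).
    apply dual_pair_diag, (contract_step (commits_contract Ha Hr) H1).
Qed.

Lemma dual_pair_compliance : compliance_rel leb B dual_pair.
Proof.
  intros r s Hrs. split.
  - intros Hstuck. destruct (dual_pair_stuck Hrs Hstuck) as [-> ->].
    split; exists One; constructor.
  - intros r' s'. apply dual_pair_tau, Hrs.
Qed.

End Compliance.
End Duality.

Theorem mainTheorem8
  (BT : Type) (L : Type) (leb : BT -> BT -> Prop)
  (leb_refl : forall t, leb t t)
  (leb_trans : forall t1 t2 t3, leb t1 t2 -> leb t2 t3 -> leb t1 t3)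
  (B : term BT L -> term BT L -> Prop)
  (B_on_SC : forall s1 s2, B s1 s2 -> SC s1 /\ SC s2)
  (B_refl : forall s, SC s -> B s s)
  (B_trans : forall s1 s2 s3, B s1 s2 -> B s2 s3 -> B s1 s3) :
  forall rho : term BT L, SC rho -> mclosed rho -> complies leb B rho (dual rho).
Proof.
  intros rho [Hw [Hc Hg]] Hm. exists dual_pair. split.
  - apply dual_pair_compliance; assumption.
  - apply dual_pair_diag. split; [exact Hc | apply wf_sc_of; assumption].
Qed.
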